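(* Let $R$ be a relation with $n$ tuples over attributes $F_1\cup F_2$, where $J=F_1\cap F_2$ is a categorical join key with domain of size $d\ge 2$ such that each value of $J$ appears exactly $n/d$ times in $R$, and the numerical feature values of the tuples of $R$ are independent random vectors with a common distribution, not correlated with $J$. Let $R_{\Join}=\pi_{F_1}(R)\Join_J\pi_{F_2}(R)$ (projections keep duplicates, so each projection has $n$ tuples), and let $s'=\gamma(R_{\Join})$, i.e. $s'[c]=|R_{\Join}|$ and $s'[p]=\sum_{t\in R_{\Join}}p(t)$ for every monomial $p$. Define, for features $f_1\in F_1\setminus J$, $f_2\in F_2\setminus J$, $$\hat s[f_1f_2]=\frac{1-n}{1-d}\frac{s'[f_1f_2]}{s'[c]}+\frac{n-d}{1-d}\frac{s'[f_1]}{s'[c]}\frac{s'[f_2]}{s'[c]},$$ and $\hat s[p]=s'[p]/s'[c]$ for every other monomial $p$ of order $1$ or $2$ in the features of $(F_1\cup F_2)\setminus J$. Then for every monomial $p$ of order $1$ or $2$ in these features, $\mathbb E[\hat s[p]]=\mathbb E[p]$, where $\mathbb E[p]$ is the expected value of $p$ under the common distribution of the tuples' feature values; i.e. $\hat s$ is an unbiased estimator of the (normalized) monomial statistics of $\pi_{F_1\cup F_2}(R)$.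
   Context: Monomials of order 1 are single features $f$; monomials of order 2 are products $f_1f_2$ of two (possibly equal) features. The join $\Join_J$ is the natural (bag) join on $J$, producing for each value of $J$ the Cartesian product of matching tuples. *)

From HB Require Import structures.
From mathcomp Require Import all_boot all_order all_algebra.
From mathcomp Require Import all_classical all_reals.
From mathcomp Require Import ereal measure lebesgue_measure lebesgue_integral probability.
Set Implicit Arguments. Unset Strict Implicit. Unset Printing Implicit Defensive.
Import Order.TTheory GRing.Theory Num.Theory.
Local Open Scope classical_set_scope.
Local Open Scope ring_scope.

(* Features: A = F1 \ J, B = F2 \ J; the numerical features of a tuple of R
   (i.e. of (F1 u F2) \ J) are indexed by the sum type A + B. *)

Inductive monomial (A B : finType) : Type :=
| mono1 of (A + B)%type
| mono2 of (A + B)%type & (A + B)%type.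
Arguments mono1 {A B}.
Arguments mono2 {A B}.

Definition eval_mono (R : realType) (A B : finType) (p : monomial A B)
  (t : (A + B)%type -> R) : R :=
  match p with
  | mono1 f => t f
  | mono2 f g => t f * t g
  end.

(* Tuple of the join pi_F1(R) |x|_J pi_F2(R) built from the F1-part of tuple i
   and the F2-part of tuple j of R (outcome w). *)
Definition join_tuple (d0 : measure_display) (T : measurableType d0)
  (R : realType) (A B : finType) (n : nat)
  (X : 'I_n -> (A + B)%type -> T -> R) (i j : 'I_n) (w : T) :
  (A + B)%type -> R :=
  fun f => match f with inl a => X i (inl a) w | inr b => X j (inr b) w end.

(* s'[c] = |R_join|: pairs (i, j) of tuples of R with equal join key *)
Definition sjoin_c (R : realType) (n d : nat) (J : 'I_n -> 'I_d) : R :=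
  (\sum_(i < n) \sum_(j < n | J i == J j) 1)%R.

Definition sjoin (d0 : measure_display) (T : measurableType d0)
  (R : realType) (A B : finType) (n d : nat) (J : 'I_n -> 'I_d)
  (X : 'I_n -> (A + B)%type -> T -> R) (p : monomial A B) (w : T) : R :=
  \sum_(i < n) \sum_(j < n | J i == J j) eval_mono p (join_tuple X i j w).

Definition shat_cross (d0 : measure_display) (T : measurableType d0)
  (R : realType) (A B : finType) (n d : nat) (J : 'I_n -> 'I_d)
  (X : 'I_n -> (A + B)%type -> T -> R) (a : A) (b : B) (w : T) : R :=
  let c := sjoin_c R J in
  (1 - n%:R) / (1 - d%:R) * (sjoin J X (mono2 (inl a) (inr b)) w / c)
  + (n%:R - d%:R) / (1 - d%:R)
    * (sjoin J X (mono1 (inl a)) w / c) * (sjoin J X (mono1 (inr b)) w / c).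

Definition shat (d0 : measure_display) (T : measurableType d0)
  (R : realType) (A B : finType) (n d : nat) (J : 'I_n -> 'I_d)
  (X : 'I_n -> (A + B)%type -> T -> R) (p : monomial A B) (w : T) : R :=
  match p with
  | mono2 (inl a) (inr b) => shat_cross J X a b w
  | mono2 (inr b) (inl a) => shat_cross J X a b w
  | _ => sjoin J X p w / sjoin_c R J
  end.

(* Since S i f may be setT, this covers every
   finite subfamily. *)
Definition independent_vectors (d0 : measure_display) (T : measurableType d0)
  (R : realType) (P : probability T R) (F : finType) (n : nat)
  (X : 'I_n -> F -> T -> R) : Prop :=
  forall S : 'I_n -> F -> set R, (forall i f, measurable (S i f)) ->
    P (\bigcap_(i in [set: 'I_n]) \bigcap_(f in [set: F]) (X i f @^-1` S i f))
    = (\prod_(i < n) P (\bigcap_(f in [set: F]) (X i f @^-1` S i f)))%E.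

Definition identically_distributed (d0 : measure_display)
  (T : measurableType d0) (R : realType) (P : probability T R) (F : finType)
  (n : nat) (X : 'I_n -> F -> T -> R) : Prop :=
  forall (i j : 'I_n) (S : F -> set R), (forall f, measurable (S f)) ->
    P (\bigcap_(f in [set: F]) (X i f @^-1` S f))
    = P (\bigcap_(f in [set: F]) (X j f @^-1` S f)).

From HB Require Import structures.
From mathcomp Require Import all_boot all_order all_algebra.
From mathcomp Require Import all_classical all_reals.
From mathcomp Require Import ereal measure lebesgue_measure lebesgue_integral probability.
From mathcomp Require Import measurable_realfun lebesgue_integral_fubini hoelder exp.
From mathcomp Require Import ring.
Set Implicit Arguments. Unset Strict Implicit. Unset Printing Implicit Defensive.
Import Order.TTheory GRing.Theory Num.Theory.
Local Open Scope classical_set_scope.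
Local Open Scope ring_scope.

(* Write mu_f for the common mean of a feature f and m = n/d for the size of a
   key class.  Every entry of s' is a sum, over the pairs (i, j) of tuples with
   equal keys, of a product of at most two feature values, and by independence
   E[X_i f * X_j g] = mu_f mu_g + [i = j] (E[f g] - mu_f mu_g).  Each tuple i
   has exactly m join partners j, one of which is i itself, so
   E[s'[f1 f2] / s'[c]] = mu_f1 mu_f2 + D / m  with  D = E[f1 f2] - mu_f1 mu_f2,
   while s'[f1] s'[f2] / s'[c]^2 = (sum_i X_i f1) (sum_j X_j f2) / n^2 has
   expectation mu_f1 mu_f2 + D / n.  The two weights of hat s[f1 f2] sum to 1
   and, as n = m d, give D the coefficient 1.  A monomial in the features of
   one side only involves one tuple per join pair and needs no correction. *)

Lemma measurable_mul_pair (R : realType) :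
  measurable_fun setT (fun z : R * R => z.1 * z.2)%R.
Proof. by apply: measurable_funM; [exact: measurable_fst|exact: measurable_snd]. Qed.

Section joint_law.
Local Open Scope ereal_scope.
Context d (T : measurableType d) (R : realType) (P : probability T R).

Definition pairRV (U V : T -> R) : T -> R * R := fun w => (U w, V w).

Lemma measurable_pairRV (U V : {mfun T >-> R}) : measurable_fun setT (pairRV U V).
Proof. exact: measurable_fun_pair. Qed.

HB.instance Definition _ (U V : {mfun T >-> R}) :=
  isMeasurableFun.Build _ _ _ _ (pairRV U V) (measurable_pairRV U V).

Lemma distribution_pairRV_eq (U V U' V' : {mfun T >-> R}) :
  (forall A B, measurable A -> measurable B ->
    P (U @^-1` A `&` V @^-1` B) = P (U' @^-1` A `&` V' @^-1` B)) ->
  forall C, measurable C ->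
    distribution P (pairRV U V) C = distribution P (pairRV U' V') C.
Proof.
move=> eqUV C mC.
pose G := [set A `*` B | A in @measurable _ R & B in @measurable _ R].
apply: (@measure_unique _ _ _ G (fun=> setT)) => //.
- by rewrite measurable_prod_measurableType.
- move=> _ _ [A1 mA1 [B1 mB1 <-]] [A2 mA2 [B2 mB2 <-]].
  rewrite -setXI; exists (A1 `&` A2); first exact: measurableI.
  by exists (B1 `&` B2) => //; exact: measurableI.
- by move=> _; exists setT => //; exists setT => //; rewrite setXTT.
- by rewrite bigcup_const.
- by move=> _ [A mA [B mB <-]]; exact: eqUV.
- by move=> k /=; rewrite probability_setT ltry.
Qed.

Lemma expectation_pairRV_eq (U V U' V' : {mfun T >-> R}) (h : R * R -> R) :
  measurable_fun setT h ->
  h \o pairRV U V \in Lfun P 1 -> h \o pairRV U' V' \in Lfun P 1 ->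
  (forall A B, measurable A -> measurable B ->
    P (U @^-1` A `&` V @^-1` B) = P (U' @^-1` A `&` V' @^-1` B)) ->
  'E_P[h \o pairRV U V] = 'E_P[h \o pairRV U' V'].
Proof.
move=> mh /Lfun1_integrable ihUV /Lfun1_integrable ihUV' eqUV; rewrite unlock.
have mEh : measurable_fun setT (EFin \o h) by exact/measurable_EFinP.
transitivity (\int[distribution P (pairRV U V)]_z (EFin \o h) z).
  by rewrite (integral_distribution (X := pairRV U V)).
transitivity (\int[distribution P (pairRV U' V')]_z (EFin \o h) z).
  by apply: eq_measure_integral => C mC _; exact: distribution_pairRV_eq.
by rewrite (integral_distribution (X := pairRV U' V')).
Qed.

Lemma distribution_pairRV_indep (U V : {mfun T >-> R}) :
  (forall A B, measurable A -> measurable B ->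
    P (U @^-1` A `&` V @^-1` B) = P (U @^-1` A) * P (V @^-1` B)) ->
  forall C, measurable C ->
    (distribution P U \x distribution P V) C = distribution P (pairRV U V) C.
Proof. by move=> indepUV; apply: product_measure_unique => A B mA mB; exact: indepUV. Qed.

Lemma expectationM_indep (U V : {mfun T >-> R}) :
  (forall A B, measurable A -> measurable B ->
    P (U @^-1` A `&` V @^-1` B) = P (U @^-1` A) * P (V @^-1` B)) ->
  (U : T -> R) \in Lfun P 1 -> (V : T -> R) \in Lfun P 1 ->
  (U \* V)%R \in Lfun P 1 ->
  'E_P[(U \* V)%R] = 'E_P[U] * 'E_P[V].
Proof.
move=> indepUV /Lfun1_integrable iU /Lfun1_integrable iV /Lfun1_integrable iUV.
pose mU := distribution P U; pose mV := distribution P V.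
pose h (z : R * R) := (z.1 * z.2)%R.
have mEh : measurable_fun setT (EFin \o h).
  by apply/measurable_EFinP; exact: measurable_mul_pair.
have prodE := distribution_pairRV_indep indepUV.
have iprod : (mU \x mV).-integrable setT (EFin \o h).
  have : (distribution P (pairRV U V)).-integrable setT (EFin \o h).
    exact: (integrable_pushforward (phi := pairRV U V)).
  case/integrableP => _ ifin; apply/integrableP; split => //.
  rewrite (eq_measure_integral (distribution P (pairRV U V))) // => C mC _.
  exact: prodE.
have iEFin (W : {mfun T >-> R}) : P.-integrable setT (EFin \o W) ->
    (distribution P W).-integrable setT EFin.
  by move=> iW; apply: integrable_pushforward => //; exact/measurable_EFinP.
have EW (W : {mfun T >-> R}) : P.-integrable setT (EFin \o W) ->
    \int[distribution P W]_x x%:E = 'E_P[W].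
  by move=> iW; rewrite unlock (integral_distribution (X := W) (f := EFin)).
have fV : 'E_P[V] \is a fin_num by rewrite unlock; exact: integrable_fin_num.
transitivity (\int[mU \x mV]_z (EFin \o h) z).
  rewrite (eq_measure_integral (distribution P (pairRV U V))) => [|C mC _].
    by rewrite unlock (integral_distribution (X := pairRV U V)).
  exact: prodE.
rewrite -integral12_prod_meas1 //.
transitivity (\int[mU]_x (x%:E * (fine 'E_P[V])%:E)).
  apply: eq_integral => x _; rewrite /fubini_F /=.
  under eq_integral do rewrite EFinM.
  by rewrite (integralZl measurableT (iEFin _ iV)) EW ?fineK.
by rewrite integralZr ?EW ?fineK //; exact: iEFin.
Qed.

End joint_law.

Section expectation_linearity.
Local Open Scope ereal_scope.
Context d (T : measurableType d) (R : realType) (P : probability T R).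

Lemma Lfun2_of_integrable_sqr (U : {mfun T >-> R}) :
  P.-integrable setT (fun w => ((U w) ^+ 2)%:E) -> (U : T -> R) \in Lfun P 2%:E.
Proof.
move=> iU2; apply/andP; split; first by rewrite inE; exact: measurable_funPT.
rewrite inE /= /finite_norm; apply: (@lty_poweRy _ _ 2) => //.
rewrite poweR_Lnorm // (eq_integral (fun w => `|((U w) ^+ 2)%:E|)).
  by case/integrableP: iU2.
by move=> w _ /=; rewrite powR_mulrn // normrX.
Qed.

Lemma Lfun1_sum (I : Type) (s : seq I) (p : pred I) (F : I -> T -> R) :
  (forall i, p i -> F i \in Lfun P 1) ->
  (fun w => \sum_(i <- s | p i) F i w)%R \in Lfun P 1.
Proof. by move=> F1; rewrite -fct_sumE; exact: rpred_sum. Qed.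

Lemma expectation_sum_EFin (I : Type) (s : seq I) (p : pred I)
    (F : I -> T -> R) (x : I -> R) :
  (forall i, p i -> F i \in Lfun P 1) ->
  (forall i, p i -> 'E_P[F i] = (x i)%:E) ->
  'E_P[fun w => (\sum_(i <- s | p i) F i w)%R] = (\sum_(i <- s | p i) x i)%R%:E.
Proof.
move=> F1 EF; elim: s => [|i s IHs].
  by under eq_fun do rewrite big_nil; rewrite big_nil expectation_cst.
under eq_fun do rewrite big_cons; rewrite big_cons.
case: ifP => pi //.
by rewrite expectationD ?F1 ?Lfun1_sum // EF // IHs EFinD.
Qed.

Lemma Lfun1_mulr (Z : T -> R) (k : R) :
  Z \in Lfun P 1 -> (fun w => Z w * k)%R \in Lfun P 1.
Proof. exact: Lfun_scale. Qed.

Lemma expectation_mulr_EFin (Z : T -> R) (z k : R) :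
  Z \in Lfun P 1 -> 'E_P[Z] = z%:E -> 'E_P[fun w => (Z w * k)%R] = (z * k)%:E.
Proof. by move=> Z1 EZ; rewrite [LHS]expectationZl // EZ -EFinM mulrC. Qed.

End expectation_linearity.

Lemma bigcap_if2 (T : Type) (K : eqType) (a b : K) (U V : K -> set T) :
  \bigcap_(k in [set: K])
     ((if k == a then U k else setT) `&` (if k == b then V k else setT))
  = U a `&` V b.
Proof.
apply/seteqP; split => [w capw | w [Uw Vw] k _].
  by split; [have := capw a I | have := capw b I]; rewrite /= eqxx => -[].
by split; case: eqP => // ->.
Qed.

Lemma bigcap_preimage_if2 (T U : Type) (K : eqType) (Z : K -> T -> U)
    (a b : K) (A B : set U) :
  \bigcap_(k in [set: K])
     (Z k @^-1` ((if k == a then A else setT) `&` (if k == b then B else setT)))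
  = Z a @^-1` A `&` Z b @^-1` B.
Proof.
rewrite -(bigcap_if2 a b (fun k => Z k @^-1` A) (fun k => Z k @^-1` B)).
by apply: eq_bigcapr => k _; rewrite preimage_setI; case: eqP; case: eqP.
Qed.

Section iid_pairs.
Local Open Scope ereal_scope.
Context d (T : measurableType d) (R : realType) (P : probability T R)
  (F : finType) (n : nat) (Y : 'I_n -> F -> T -> R).

Lemma identically_distributed_pair i j f g : identically_distributed P Y ->
  forall A B, measurable A -> measurable B ->
  P (Y i f @^-1` A `&` Y i g @^-1` B) = P (Y j f @^-1` A `&` Y j g @^-1` B).
Proof.
move=> Yid A B mA mB.
pose S h := (if h == f then A else setT) `&` (if h == g then B else setT).
have mS h : measurable (S h) by apply: measurableI; case: ifP.
by have := Yid i j S mS; rewrite !bigcap_preimage_if2.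
Qed.

Lemma independent_vectors_pair i j f g : independent_vectors P Y -> i != j ->
  forall A B, measurable A -> measurable B ->
  P (Y i f @^-1` A `&` Y j g @^-1` B) = P (Y i f @^-1` A) * P (Y j g @^-1` B).
Proof.
move=> Yindep ij A B mA mB.
pose S k h := (if h == f then if k == i then A else setT else setT) `&`
              (if h == g then if k == j then B else setT else setT).
have mS k h : measurable (S k h).
  by apply: measurableI; repeat case: ifP.
have rowE k : \bigcap_(h in [set: F]) (Y k h @^-1` S k h) =
    (if k == i then Y k f @^-1` A else setT) `&`
    (if k == j then Y k g @^-1` B else setT).
  by rewrite bigcap_preimage_if2; case: eqP; case: eqP.
have := Yindep S mS.
rewrite (eq_bigcapr (fun k _ => rowE k)) bigcap_if2 => ->.
under eq_bigr do rewrite rowE.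
rewrite (bigD1 i) //= (bigD1 j) /=; last by rewrite eq_sym.
rewrite big1 ?mule1; last first.
  by move=> k /andP[/negbTE -> /negbTE ->]; rewrite setIT probability_setT.
by rewrite eqxx (negbTE ij) eq_sym (negbTE ij) eqxx setIT setTI.
Qed.

End iid_pairs.

Section iid_moments.
Local Open Scope ereal_scope.
Context d (T : measurableType d) (R : realType) (P : probability T R)
  (F : finType) (n : nat) (X : 'I_n -> F -> {RV P >-> R}).
Hypothesis X_indep : independent_vectors P (fun i f => X i f : T -> R).
Hypothesis X_id : identically_distributed P (fun i f => X i f : T -> R).
Hypothesis X_sq : forall i f, P.-integrable setT (fun w => (X i f w ^+ 2)%:E).
Variable i0 : 'I_n.

Definition mean f := fine 'E_P[X i0 f].
Definition moment2 f g := fine 'E_P[(X i0 f \* X i0 g)%R].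

Lemma moment2C f g : moment2 f g = moment2 g f.
Proof.
by rewrite /moment2; congr (fine 'E_P[_]); apply/funext => w /=; rewrite mulrC.
Qed.

Lemma Lfun1_X i f : (X i f : T -> R) \in Lfun P 1.
Proof.
apply: Lfun_subset12 (Lfun2_of_integrable_sqr (X_sq i f)).
exact: fin_num_measure.
Qed.

Lemma Lfun1_XM i f j g : (X i f \* X j g)%R \in Lfun P 1.
Proof. by apply: Lfun2_mul_Lfun1; exact: Lfun2_of_integrable_sqr. Qed.

Lemma expectation_X i f : 'E_P[X i f] = (mean f)%:E.
Proof.
have -> : 'E_P[X i f] = 'E_P[X i0 f].
  exact: (expectation_pairRV_eq measurable_fst (Lfun1_X i f) (Lfun1_X i0 f)
            (identically_distributed_pair i i0 f f X_id)).
by rewrite fineK // expectation_fin_num // Lfun1_X.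
Qed.

Lemma expectation_XX i f g : 'E_P[(X i f \* X i g)%R] = (moment2 f g)%:E.
Proof.
have -> : 'E_P[(X i f \* X i g)%R] = 'E_P[(X i0 f \* X i0 g)%R].
  exact: (expectation_pairRV_eq (@measurable_mul_pair R)
            (Lfun1_XM i f i g) (Lfun1_XM i0 f i0 g)
            (identically_distributed_pair i i0 f g X_id)).
by rewrite fineK // expectation_fin_num // Lfun1_XM.
Qed.

Lemma expectation_XM i j f g : 'E_P[(X i f \* X j g)%R] =
  (mean f * mean g + (i == j)%:R * (moment2 f g - mean f * mean g))%:E.
Proof.
have [<-|ij] := eqVneq i j; first by rewrite mul1r addrC subrK expectation_XX.
rewrite mul0r addr0 expectationM_indep ?Lfun1_X ?Lfun1_XM // ?expectation_X //.
exact: (independent_vectors_pair f g X_indep ij).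
Qed.

End iid_moments.

(* [set i | p i] is a classical set, as in the statement of proposition2. *)
Lemma card_mkset (K : finType) (p : pred K) : #|[set i | p i]| = #|p|.
Proof. by apply: eq_card => i; apply/idP/idP => [/set_mem|/mem_set]. Qed.

Lemma sum_diag_regular (R : pzRingType) (n k : nat) (r : rel 'I_n) (u v : R) :
  (forall i, r i i) -> (forall i, #|r i| = k) ->
  \sum_(i < n) \sum_(j < n | r i j) (u + (i == j)%:R * v)
  = n%:R * (k%:R * u + v).
Proof.
move=> r_refl r_card.
have rowE i : \sum_(j < n | r i j) (u + (i == j)%:R * v) = k%:R * u + v.
  rewrite big_split /= sumr_const r_card mulr_natl (bigD1 i) //= eqxx mul1r.
  by rewrite big1 ?addr0 // => j /andP[_ /negbTE]; rewrite eq_sym => ->; rewrite mul0r.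
by under eq_bigr do rewrite rowE; rewrite sumr_const card_ord [RHS]mulr_natl.
Qed.

Section join_counting.
Variables (R : pzRingType) (n d m : nat) (J : 'I_n -> 'I_d).
Hypothesis card_key : forall k, #|[pred i | J i == k]| = m.

Lemma card_join_row i : #|[pred j | J i == J j]| = m.
Proof. by rewrite -(card_key (J i)); apply: eq_card => j; rewrite !inE eq_sym. Qed.

Lemma sum_join_row (i : 'I_n) (x : R) : \sum_(j < n | J i == J j) x = m%:R * x.
Proof. by rewrite sumr_const (card_join_row i) mulr_natl. Qed.

Lemma sum_join_l (G : 'I_n -> R) :
  \sum_(i < n) \sum_(j < n | J i == J j) G i = m%:R * \sum_(i < n) G i.
Proof. by rewrite mulr_sumr; apply: eq_bigr => i _; rewrite sum_join_row. Qed.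

Lemma sum_join_r (G : 'I_n -> R) :
  \sum_(i < n) \sum_(j < n | J i == J j) G j = m%:R * \sum_(j < n) G j.
Proof.
rewrite (exchange_big_dep xpredT) //= -sum_join_l.
by apply: eq_bigr => j _; apply: eq_bigl => i; rewrite eq_sym.
Qed.

End join_counting.

Section regular_mean.
Local Open Scope ereal_scope.
Context d (T : measurableType d) (R : realType) (P : probability T R).

Lemma expectation_regular_mean (n k : nat) (r : rel 'I_n)
    (G : 'I_n -> 'I_n -> T -> R) (u v : R) :
  (0 < n)%N -> (forall i, r i i) -> (forall i, #|r i| = k) ->
  (forall i j, G i j \in Lfun P 1) ->
  (forall i j, r i j -> 'E_P[G i j] = (u + (i == j)%:R * v)%:E) ->
  'E_P[fun w => ((\sum_(i < n) \sum_(j < n | r i j) G i j w) / (n * k)%:R)%R]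
  = (u + v / k%:R)%:E.
Proof.
move=> n_gt0 r_refl r_card G1 EG.
have k_gt0 : (0 < k)%N.
  rewrite -(r_card (Ordinal n_gt0)); apply/card_gt0P; exists (Ordinal n_gt0).
  exact: r_refl.
have sum1 : (fun w => \sum_(i < n) \sum_(j < n | r i j) G i j w)%R \in Lfun P 1.
  by apply: Lfun1_sum => i _; apply: Lfun1_sum => j _; exact: G1.
rewrite (expectation_mulr_EFin _ sum1 (z := n%:R * (k%:R * u + v))%R).
  congr EFin; rewrite natrM; field.
  by rewrite !pnatr_eq0 -!lt0n n_gt0 k_gt0.
pose x i := (\sum_(j < n | r i j) (u + (i == j)%:R * v))%R.
rewrite (expectation_sum_EFin _ _ (x := x)).
- by rewrite (sum_diag_regular _ _ r_refl r_card).
- by move=> i _; apply: Lfun1_sum => j _; exact: G1.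
- by move=> i _; apply: expectation_sum_EFin => j rij; [exact: G1|exact: EG].
Qed.

End regular_mean.

Section estimator.
Local Open Scope ereal_scope.
Context (d0 : measure_display) (T : measurableType d0) (R : realType)
  (P : probability T R) (A B : finType) (n d : nat) (J : 'I_n -> 'I_d)
  (X : 'I_n -> (A + B)%type -> {RV P >-> R}).
Hypothesis n_gt0 : (0 < n)%N.
Hypothesis d_gt1 : (1 < d)%N.
Hypothesis key_balanced : forall k, (#|[set i | J i == k]| * d)%N = n.
Hypothesis X_indep : independent_vectors P (fun i f => X i f : T -> R).
Hypothesis X_id : identically_distributed P (fun i f => X i f : T -> R).
Hypothesis X_sq : forall i f, P.-integrable setT (fun w => (X i f w ^+ 2)%:E).
Variable i0 : 'I_n.

Let Y i f := (X i f : T -> R).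
Let m := (n %/ d)%N.

Let card_key k : #|[pred i | J i == k]| = m.
Proof.
have := congr1 (divn^~ d) (key_balanced k).
by rewrite /= mulnK ?card_mkset // ltnW.
Qed.

Let n_eq : n = (m * d)%N.
Proof. by rewrite -[in LHS](key_balanced (J i0)) card_mkset card_key. Qed.

Let m_gt0 : (0 < m)%N.
Proof. by move: n_gt0; rewrite n_eq muln_gt0 => /andP[]. Qed.

Let nR : (n%:R = m%:R * d%:R :> R)%R.
Proof. by rewrite n_eq natrM. Qed.

Let n_neq0 : (n%:R != 0 :> R)%R.
Proof. by rewrite pnatr_eq0 -lt0n. Qed.

Let m_neq0 : (m%:R != 0 :> R)%R.
Proof. by rewrite pnatr_eq0 -lt0n. Qed.

Let d_neq0 : (d%:R != 0 :> R)%R.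
Proof. by rewrite pnatr_eq0 -lt0n ltnW. Qed.

Let one_sub_d_neq0 : (1 - d%:R != 0 :> R)%R.
Proof. by rewrite subr_eq0 eq_sym pnatr_eq1 gtn_eqF. Qed.

Lemma sjoin_cE : sjoin_c R J = (n * m)%:R.
Proof.
rewrite /sjoin_c; under eq_bigr do rewrite (sum_join_row card_key) mulr1.
by rewrite sumr_const card_ord natrM mulr_natl.
Qed.

Let mu := mean X i0.
Let mu2 := moment2 X i0.

Lemma Lfun1_join_tuple p i j :
  (fun w => eval_mono p (join_tuple Y i j w)) \in Lfun P 1.
Proof.
by case: p => [[a|b]|[a|b] [a'|b']]; first [exact: Lfun1_X | exact: Lfun1_XM].
Qed.

Lemma Lfun1_sjoin p : (fun w => sjoin J Y p w / sjoin_c R J)%R \in Lfun P 1.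
Proof.
apply/Lfun1_mulr/Lfun1_sum => i _.
by apply: Lfun1_sum => j _; exact: Lfun1_join_tuple.
Qed.

Lemma expectation_sjoin_div p (u v : R) :
  (forall i j, J i == J j ->
     'E_P[fun w => eval_mono p (join_tuple Y i j w)] = (u + (i == j)%:R * v)%:E) ->
  'E_P[fun w => (sjoin J Y p w / sjoin_c R J)%R] = (u + v / m%:R)%:E.
Proof.
move=> Ep; rewrite sjoin_cE; apply: expectation_regular_mean => //.
- exact: card_join_row.
- exact: Lfun1_join_tuple.
Qed.

Lemma expectation_sjoin_div_const p (u : R) :
  (forall i j, J i == J j ->
     'E_P[fun w => eval_mono p (join_tuple Y i j w)] = u%:E) ->
  'E_P[fun w => (sjoin J Y p w / sjoin_c R J)%R] = u%:E.
Proof.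
move=> Ep; rewrite (@expectation_sjoin_div _ u 0) ?mul0r ?addr0 // => i j Jij.
by rewrite mulr0 addr0; exact: Ep.
Qed.

Definition mono_moment (p : monomial A B) : R :=
  match p with mono1 f => mu f | mono2 f g => mu2 f g end.

Lemma expectation_mono i p :
  'E_P[fun w => eval_mono p (fun f => X i f w)] = (mono_moment p)%:E.
Proof. by case: p => [f|f g]; [exact: expectation_X | exact: expectation_XX]. Qed.

Lemma shat_crossE a b : shat_cross J Y a b =
  ((fun w => sjoin J Y (mono2 (inl a) (inr b)) w / sjoin_c R J
             * ((1 - n%:R) / (1 - d%:R)))
   \+ (fun w => (\sum_(i < n) \sum_(j < n) Y i (inl a) w * Y j (inr b) w)
                / (n * n)%:R * ((n%:R - d%:R) / (1 - d%:R))))%R.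
Proof.
apply/funext => w; rewrite /shat_cross /sjoin /=.
rewrite (sum_join_l card_key) (sum_join_r card_key) sjoin_cE -big_distrlr /=.
by rewrite !natrM; field; rewrite n_neq0 m_neq0 one_sub_d_neq0.
Qed.

Lemma expectation_shat_cross a b :
  'E_P[shat_cross J Y a b] = (mu2 (inl a) (inr b))%:E.
Proof.
pose u := (mu (inl a) * mu (inr b))%R; pose v := (mu2 (inl a) (inr b) - u)%R.
pose G i j := (Y i (inl a) \* Y j (inr b))%R.
have G1 i j : G i j \in Lfun P 1 by exact: Lfun1_XM.
have EG i j : 'E_P[G i j] = (u + (i == j)%:R * v)%:E by exact: expectation_XM.
have join_mean :
    'E_P[fun w => (sjoin J Y (mono2 (inl a) (inr b)) w / sjoin_c R J)%R]
    = (u + v / m%:R)%:E.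
  by apply: expectation_sjoin_div => i j _; exact: EG.
have full_mean :
    'E_P[fun w => ((\sum_(i < n) \sum_(j < n) G i j w) / (n * n)%:R)%R]
    = (u + v / n%:R)%:E.
  apply: (@expectation_regular_mean _ _ _ _ _ _ (fun _ _ => true)) => // _.
  exact: card_ord.
have full1 :
    (fun w => (\sum_(i < n) \sum_(j < n) G i j w) / (n * n)%:R)%R \in Lfun P 1.
  by apply/Lfun1_mulr/Lfun1_sum => i _; apply: Lfun1_sum.
rewrite shat_crossE expectationD; last 2 first.
- exact: Lfun1_mulr (Lfun1_sjoin _).
- exact: Lfun1_mulr full1.
rewrite (expectation_mulr_EFin _ (Lfun1_sjoin _) join_mean).
rewrite (expectation_mulr_EFin _ full1 full_mean) -EFinD /v /u nR.
by congr EFin; field; rewrite one_sub_d_neq0 d_neq0 m_neq0.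
Qed.

Lemma expectation_shat p : 'E_P[shat J Y p] = (mono_moment p)%:E.
Proof.
case: p => [[a|b]|[a|b] [a'|b']]; rewrite /shat.
- by apply: expectation_sjoin_div_const => i j _; exact: expectation_X.
- by apply: expectation_sjoin_div_const => i j _; exact: expectation_X.
- by apply: expectation_sjoin_div_const => i j _; exact: expectation_XX.
- exact: expectation_shat_cross.
- by rewrite /= /mu2 moment2C; exact: expectation_shat_cross.
- by apply: expectation_sjoin_div_const => i j _; exact: expectation_XX.
Qed.

End estimator.

Unset Implicit Arguments.
Theorem proposition2 (d0 : measure_display) (T : measurableType d0)
  (R : realType) (P : probability T R) (A B : finType) (n d : nat)
  (J : 'I_n -> 'I_d) (X : 'I_n -> (A + B)%type -> {RV P >-> R}) :
  (0 < n)%N -> (2 <= d)%N ->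
  (forall k : 'I_d, (#|[set i | J i == k]| * d)%N = n) ->
  independent_vectors P (fun i f => (X i f : T -> R)) ->
  identically_distributed P (fun i f => (X i f : T -> R)) ->
  (forall i f, P.-integrable setT (fun w => ((X i f w) ^+ 2)%:E)) ->
  forall (p : monomial A B) (i0 : 'I_n),
    ('E_P[shat J (fun i f => (X i f : T -> R)) p]
     = 'E_P[fun w => eval_mono p (fun f => X i0 f w)])%E.
Proof.
move=> n_gt0 d_gt1 key_balanced X_indep X_id X_sq p i0.
rewrite (expectation_shat n_gt0 d_gt1 key_balanced X_indep X_id X_sq i0).
by rewrite (expectation_mono X_id X_sq i0 i0).
Qed.
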